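(* In the testing setting described in the context, let $\hat\rho^e$ be obtained as in Lemma 3 (with parameters $\delta_0\in(0,1]$, $\epsilon_0>0$) and $e^e$ as in Lemma 4 (with parameters $\delta_1\in(0,1]$, $\epsilon_1>0$), the two optimization runs using independent samples, and assume the hypotheses of both lemmas hold. Define $\rho^e=\hat\rho^e-e^e$ and $\epsilon=2e^e+\epsilon_0+\epsilon_1$. Then $$\mathbb{P}\big[\rho^*\ge\rho^e\big]\ge(1-\delta_0)(1-\delta_1),\qquad\mathbb{P}\big[|\rho^*-\rho^e|\le\epsilon\big]\ge(1-\delta_0)(1-\delta_1),$$ where $\rho^*=\min_{d\in\mathcal{D}}\mathbb{E}_{\Pi(d)}[\rho(\phi(d))]$.
   Context: Testing setting: $\mathcal{D}\subset\mathbb{R}^l$ is a compact convex set of test parameters. For each $d\in\mathcal{D}$, the true system produces a random state-trajectory signal $\phi(d)$ with distribution $\Pi(d)$, and a simulator produces a random signal $\hat\phi(d)$ with distribution $\hat\Pi(d)$, independent of $\phi(d)$. A robustness measure $\rho$ maps signals to bounded real values. Define $\hat\rho^*=\min_{d\in\mathcal{D}}\mathbb{E}_{\hat\Pi(d)}[\rho(\hat\phi(d))]$ and $e^*=\max_{d\in\mathcal{D}}\mathbb{E}_{\Pi(d),\hat\Pi(d)}[|\rho(\phi(d))-\rho(\hat\phi(d))|]$. Lemma 3: under RKHS-norm bound $B$, $R$-sub-Gaussian sampling noise and a kernel with sublinear information gain for $d\mapsto-\mathbb{E}[\rho(\hat\phi(d))]$, the Modified GP-UCB algorithm (a GP-UCB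 procedure that stops when $2\beta_i\sigma_{i-1}(z_i)\le\epsilon$ and outputs $J^e=\mu_{i-1}(z_i)+\beta_i\sigma_{i-1}(z_i)$) produces $\hat\rho^e=-J^e$ with $\mathbb{P}[\hat\rho^*\ge\hat\rho^e]\ge1-\delta_0$ and $\mathbb{P}[|\hat\rho^*-\hat\rho^e|\le\epsilon_0]\ge1-\delta_0$. Lemma 4: under the analogous hypotheses for $d\mapsto\mathbb{E}[|\rho(\phi(d))-\rho(\hat\phi(d))|]$, the same algorithm produces $e^e=J^e$ with $\mathbb{P}[e^*\le e^e]\ge1-\delta_1$ and $\mathbb{P}[|e^*-e^e|\le\epsilon_1]\ge1-\delta_1$. *)

From HB Require Import structures.
From mathcomp Require Import all_boot all_order all_algebra.
From mathcomp Require Import all_classical all_reals all_analysis.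
Set Implicit Arguments. Unset Strict Implicit. Unset Printing Implicit Defensive.
Import Order.TTheory GRing.Theory Num.Theory.
Import numFieldNormedType.Exports.
Local Open Scope classical_set_scope.
Local Open Scope ring_scope.

Definition indep2 {dO dA dB} {Omega : measurableType dO}
  {A : measurableType dA} {B : measurableType dB} {R : realType}
  (P : probability Omega R) (X : Omega -> A) (Y : Omega -> B) : Prop :=
  forall (SA : set A) (SB : set B), measurable SA -> measurable SB ->
    P (X @^-1` SA `&` Y @^-1` SB) = (P (X @^-1` SA) * P (Y @^-1` SB))%E.

(* Real-valued expectation (used for bounded, hence integrable, variables). *)
Definition Ereal {d} {Omega : measurableType d} {R : realType}
  (P : probability Omega R) (f : Omega -> R) : R := fine ('E_P[f])%E.

Definition is_min_on {T} {R : realType} (D : set T) (f : T -> R) (m : R) :=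
  (exists2 d, D d & f d = m) /\ (forall d, D d -> m <= f d).

Definition is_max_on {T} {R : realType} (D : set T) (f : T -> R) (m : R) :=
  (exists2 d, D d & f d = m) /\ (forall d, D d -> f d <= m).

From HB Require Import structures.
From mathcomp Require Import all_boot all_order all_algebra.
From mathcomp Require Import all_classical all_reals all_analysis.
From mathcomp Require Import measurable_realfun lra.
Import Order.TTheory GRing.Theory Num.Theory.
Import numFieldNormedType.Exports.
Local Open Scope classical_set_scope.
Local Open Scope ring_scope.

(* For every test parameter d,
   |E rho(phi d) - E rho(phihat d)| <= E |rho(phi d) - rho(phihat d)| <= e*,
   so the two minima satisfy |rho* - rhohat*| <= e*. The Lemma 3 guarantees
   (rhohat^e <= rhohat*, resp. |rhohat* - rhohat^e| <= eps0) and the Lemma 4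
   guarantee e* <= e^e hold jointly with probability at least
   (1 - delta0)(1 - delta1) by independence of the runs, and on that event
   rho^e <= rhohat* - e* <= rho* and |rho* - rho^e| <= e* + eps0 + e^e <= eps. *)

Lemma measurable_ler_set {d} {T : measurableType d} {R : realType} (f g : T -> R) :
  measurable_fun setT f -> measurable_fun setT g -> measurable [set w | f w <= g w].
Proof.
move=> mf mg.
have -> : [set w | f w <= g w] = setT `&` (g \- f) @^-1` `[0, +oo[%classic.
  by apply/seteqP; split => w /=; rewrite in_itv /= andbT subr_ge0 //; case.
exact: measurable_funB.
Qed.

Section BoundedExpectation.
Context {d : measure_display} {Omega : measurableType d} {R : realType}.
Variable P : probability Omega R.

Lemma bounded_Lfun1 (f : Omega -> R) : measurable_fun setT f ->
  (exists M : R, forall w, `|f w| <= M) -> f \in Lfun P 1.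
Proof.
move=> mf [M fM]; apply/Lfun1_integrable.
apply: measurable_bounded_integrable => //.
  exact: le_lt_trans (probability_le1 P measurableT) (ltry _).
exists M; split; first exact: num_real.
by move=> x Mx y _; apply: le_trans (fM y) _; apply: ltW.
Qed.

Lemma Ereal_subr_le_norm (f g : Omega -> R) :
  measurable_fun setT f -> measurable_fun setT g ->
  (exists M : R, forall w, `|f w| <= M) -> (exists M : R, forall w, `|g w| <= M) ->
  Ereal P f - Ereal P g <= Ereal P (fun w => `|f w - g w|).
Proof.
move=> mf mg bf bg.
have If := bounded_Lfun1 _ mf bf; have Ig := bounded_Lfun1 _ mg bg.
have bfg : exists M : R, forall w, `|(f \- g) w| <= M.
  case: bf => Mf fM; case: bg => Mg gM; exists (Mf + Mg) => w.
  by rewrite /= (le_trans (ler_normB _ _))// lerD.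
have Ifg := bounded_Lfun1 _ (measurable_funB mf mg) bfg.
have Inorm : (fun w => `|f w - g w|) \in Lfun P 1 := Lfun_norm Ifg.
rewrite /Ereal -fineB ?expectation_fin_num// -expectationB//.
rewrite fine_le ?expectation_fin_num// (le_trans (lee_abs _))// unlock.
by apply: (le_abse_integral P measurableT); exact/measurable_EFinP/measurable_funB.
Qed.

Lemma Ereal_dist_le (f g : Omega -> R) :
  measurable_fun setT f -> measurable_fun setT g ->
  (exists M : R, forall w, `|f w| <= M) -> (exists M : R, forall w, `|g w| <= M) ->
  `|Ereal P f - Ereal P g| <= Ereal P (fun w => `|f w - g w|).
Proof.
move=> mf mg bf bg; rewrite ler_norml Ereal_subr_le_norm// andbT lerNl opprB.
have -> : (fun w => `|f w - g w|) = (fun w => `|g w - f w|).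
  by apply/funext => w; rewrite distrC.
exact: Ereal_subr_le_norm.
Qed.

Lemma Ereal_ge0 (f : Omega -> R) : (forall w, 0 <= f w) -> 0 <= Ereal P f.
Proof. by move=> f0; apply/fine_ge0/expectation_ge0. Qed.

End BoundedExpectation.

Lemma is_min_on_dist {T} {R : realType} (D : set T) (f g : T -> R) (a b e : R) :
  is_min_on D f a -> is_min_on D g b ->
  (forall x, D x -> `|f x - g x| <= e) -> `|a - b| <= e.
Proof.
move=> [[xa Dxa <-] fmin] [[xb Dxb <-] gmin] fg.
have := fmin _ Dxb; have := gmin _ Dxa.
have := fg _ Dxa; have := fg _ Dxb; rewrite !ler_norml; lra.
Qed.

Section IndependentEvents.
Context {d : measure_display} {Omega : measurableType d} {R : realType}.
Variable Q : probability Omega R.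

Lemma indep2_joint_ge {dA dB} {A : measurableType dA} {B : measurableType dB}
    (X : Omega -> A) (Y : Omega -> B) (SA : set A) (SB : set B) (E : set Omega)
    (a b : R) :
  measurable_fun setT X -> measurable_fun setT Y -> indep2 Q X Y ->
  measurable SA -> measurable SB -> measurable E -> 0 <= a -> 0 <= b ->
  (a%:E <= Q (X @^-1` SA))%E -> (b%:E <= Q (Y @^-1` SB))%E ->
  (forall w, SA (X w) -> SB (Y w) -> E w) ->
  ((a * b)%:E <= Q E)%E.
Proof.
move=> mX mY XY mSA mSB mE a0 b0 QA QB AB_E.
apply: (@le_trans _ _ (Q (X @^-1` SA `&` Y @^-1` SB))).
  by rewrite XY// EFinM lee_pmul.
have mXA : measurable (X @^-1` SA) by rewrite -[X @^-1` _]setTI; exact: mX.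
have mYB : measurable (Y @^-1` SB) by rewrite -[Y @^-1` _]setTI; exact: mY.
by apply: le_measure; rewrite ?inE//; [exact: measurableI | move=> w []; exact: AB_E].
Qed.

End IndependentEvents.

Theorem theorem2
  (R : realType) (l : nat)
  (D : set 'rV[R]_l) (Dcompact : compact D)
  (Dconvex : convex_set (D : set (convex_lmodType 'rV[R]_l)))
  (dS : measure_display) (S : measurableType dS)
  (rho : S -> R) (rho_meas : measurable_fun setT rho)
  (rho_bdd : exists M : R, forall s, `|rho s| <= M)
  (dO : measure_display) (Omega : measurableType dO) (P : probability Omega R)
  (phi phihat : 'rV[R]_l -> Omega -> S)
  (phi_meas : forall d, measurable_fun setT (phi d))
  (phihat_meas : forall d, measurable_fun setT (phihat d))
  (phi_indep : forall d, D d -> indep2 P (phi d) (phihat d))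
  (rho_star rhohat_star e_star : R)
  (Hrho_star : is_min_on D (fun d => Ereal P (rho \o phi d)) rho_star)
  (Hrhohat_star : is_min_on D (fun d => Ereal P (rho \o phihat d)) rhohat_star)
  (He_star : is_max_on D
     (fun d => Ereal P (fun w => `|rho (phi d w) - rho (phihat d w)|)) e_star)
  (dQ : measure_display) (Omega' : measurableType dQ) (Q : probability Omega' R)
  (rhohat_e e_e : Omega' -> R)
  (rhohat_e_meas : measurable_fun setT rhohat_e)
  (e_e_meas : measurable_fun setT e_e)
  (runs_indep : indep2 Q rhohat_e e_e)
  (delta0 eps0 delta1 eps1 : R)
  (hd0 : 0 < delta0 <= 1) (he0 : 0 < eps0)
  (hd1 : 0 < delta1 <= 1) (he1 : 0 < eps1)
  (L3a : (Q [set w | (rhohat_e w <= rhohat_star)%R] >= (1 - delta0)%:E)%E)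
  (L3b : (Q [set w | (`|rhohat_star - rhohat_e w| <= eps0)%R] >= (1 - delta0)%:E)%E)
  (L4a : (Q [set w | (e_star <= e_e w)%R] >= (1 - delta1)%:E)%E)
  (L4b : (Q [set w | (`|e_star - e_e w| <= eps1)%R] >= (1 - delta1)%:E)%E) :
  let rho_e := fun w => rhohat_e w - e_e w in
  let eps := fun w => 2 * e_e w + eps0 + eps1 in
  (Q [set w | (rho_e w <= rho_star)%R] >= ((1 - delta0) * (1 - delta1))%:E)%E /\
  (Q [set w | (`|rho_star - rho_e w| <= eps w)%R] >= ((1 - delta0) * (1 - delta1))%:E)%E.
Proof.
move=> rho_e eps.
have [M rhoM] := rho_bdd.
have rho_gap : `|rho_star - rhohat_star| <= e_star.
  apply: is_min_on_dist Hrho_star Hrhohat_star _ => d Dd.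
  apply: le_trans (He_star.2 d Dd).
  apply: (Ereal_dist_le P (rho \o phi d) (rho \o phihat d)).
  - exact: measurableT_comp.
  - exact: measurableT_comp.
  - by exists M => w; exact: rhoM.
  - by exists M => w; exact: rhoM.
have e_star_ge0 : 0 <= e_star.
  by case: He_star => -[x _ <-] _; exact: Ereal_ge0.
have d0_ge0 : 0 <= 1 - delta0 by case/andP: hd0 => _; rewrite subr_ge0.
have d1_ge0 : 0 <= 1 - delta1 by case/andP: hd1 => _; rewrite subr_ge0.
have m_rho_e : measurable_fun setT rho_e by exact: measurable_funB.
have m_ge_e_star : measurable [set x : R | e_star <= x].
  exact: (measurable_ler_set (fun=> e_star) id).
split.
- apply: (indep2_joint_ge Q rhohat_e e_e [set x | x <= rhohat_star]
    [set x | e_star <= x] _ _ _ rhohat_e_meas e_e_meas runs_indep) => //.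
  + exact: measurable_ler_set.
  + exact: measurable_ler_set.
  + by move=> w /= ? ?; move: rho_gap; rewrite /rho_e ler_norml; lra.
- apply: (indep2_joint_ge Q rhohat_e e_e [set x | `|rhohat_star - x| <= eps0]
    [set x | e_star <= x] _ _ _ rhohat_e_meas e_e_meas runs_indep) => //.
  + apply: measurable_ler_set => //.
    by apply: measurableT_comp => //; exact: measurable_funB.
  + apply: measurable_ler_set.
      by apply: measurableT_comp => //; exact: measurable_funB.
    by apply: measurable_funD => //; apply: measurable_funD => //; exact: measurable_funM.
  + move=> w /= + ?; move: rho_gap; rewrite /rho_e /eps !ler_norml; lra.
Qed.
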